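(* Let $n\in\mathbb{N}$, $H\in\mathbb{R}^{n\times n}$, $W\in\mathbb{R}^{n\times n}$ with $W\succ 0$, let $C=\mathrm{diag}(C_{11},\dots,C_{nn})$ be diagonal with all $C_{ii}\neq 0$, and let $V=\mathrm{diag}(\sigma_1^2,\dots,\sigma_n^2)$ with all $\sigma_i>0$. Assume $(H,C)$ is observable and $(H,D)$ is controllable, where $W=DD^T$. Let $\Sigma$ be the unique positive semidefinite solution of $$\Sigma = H\Sigma H^T - H\Sigma C^T(C\Sigma C^T+V)^{-1}C\Sigma H^T + W ,$$ and let $\overline{\Sigma}:=\Sigma-\Sigma C^T(C\Sigma C^T+V)^{-1}C\Sigma=(C^TV^{-1}C+\Sigma^{-1})^{-1}$. Then $$n\ln\!\left(\frac{\sigma_u^2}{C_u^2+\sigma_u^2\lambda_n(W)^{-1}}\right)\;\le\;\ln\det\overline{\Sigma}\;\le\; n\ln\!\left(\frac{\sigma_l^2}{C_l^2}\right).$$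
   Context: $\Sigma$ and $\overline\Sigma$ are the steady-state a priori and a posteriori error covariances of a Kalman filter for $x(k+1)=Hx(k)+w(k)$, $w(k)\sim\mathcal N(0,W)$, with privatized measurements $Cx(k)+v(k)$, $v(k)\sim\mathcal N(0,V)$. For a symmetric matrix $K$, $\lambda_n(K)\le\dots\le\lambda_1(K)$ denote its eigenvalues. Indices: $l:=\arg\min_{1\le i\le n} C_{ii}^2/\sigma_i^2$ and $u:=\arg\max_{1\le i\le n} C_{ii}^2/\sigma_i^2$; $C_l:=C_{ll}$, $C_u:=C_{uu}$, and $\sigma_l,\sigma_u$ are the corresponding $\sigma_i$. *)

From HB Require Import structures.
From mathcomp Require Import all_boot all_order all_algebra.
Set Implicit Arguments. Unset Strict Implicit. Unset Printing Implicit Defensive.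
Import Order.TTheory GRing.Theory Num.Theory.
Local Open Scope ring_scope.

Definition psd (R : realFieldType) (n : nat) (A : 'M[R]_n) : Prop :=
  A^T = A /\ forall x : 'cV[R]_n, 0 <= (x^T *m A *m x) 0 0.

Definition pd (R : realFieldType) (n : nat) (A : 'M[R]_n) : Prop :=
  A^T = A /\ forall x : 'cV[R]_n, x != 0 -> 0 < (x^T *m A *m x) 0 0.

(* (H, C) observable: the observability matrix [C; CH; ...; CH^(n-1)] has rank n
   (rank of the stacked matrix = rank of the sum of the row spaces). *)
Definition observable (R : fieldType) (n p : nat) (H : 'M[R]_n) (C : 'M[R]_(p, n)) : Prop :=
  \rank (\sum_(i < n) <<C *m H ^+ i>>)%MS = n.

(* (H, D) controllable: [D, HD, ..., H^(n-1)D] has rank n (rank of its transpose). *)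
Definition controllable (R : fieldType) (n m : nat) (H : 'M[R]_n) (D : 'M[R]_(n, m)) : Prop :=
  \rank (\sum_(i < n) <<(H ^+ i *m D)^T>>)%MS = n.

Definition is_min_eigenvalue (R : realFieldType) (n : nat) (A : 'M[R]_n) (lam : R) : Prop :=
  eigenvalue A lam /\ forall a, eigenvalue A a -> lam <= a.

From HB Require Import structures.
From mathcomp Require Import all_boot all_order all_algebra.
From mathcomp Require Import sesquilinear spectral complex.
From mathcomp Require Import ring.
Set Implicit Arguments. Unset Strict Implicit. Unset Printing Implicit Defensive.
Import Order.TTheory GRing.Theory Num.Theory.
Local Open Scope ring_scope.

(* Completing the square, x^T Sbar x is the minimum over w of
   (x - C^T w)^T Sigma (x - C^T w) + w^T V w; the choice w = C^-1 x gives
   x^T Sbar x <= (sigma_l^2 / c_l^2) |x|^2.  The Riccati equation reads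
   Sigma = H Sbar H^T + W, so Sigma >= W >= lambda_n(W) I, and a coordinatewise
   Cauchy-Schwarz inequality gives x^T Sbar x >= k |x|^2 with
   k = sigma_u^2 / (c_u^2 + sigma_u^2 / lambda_n(W)).  As det Sbar is the product
   of eigenvalues lying between these Rayleigh bounds, k^n <= det Sbar <=
   (sigma_l^2 / c_l^2)^n: the exponentiated log-determinant bounds.
   Observability and controllability only ensure that Sigma exists. *)

Local Notation qf A x := ((x^T *m A *m x) 0 0).
Local Notation sqnorm x := ((x^T *m x) 0 0).

Lemma entryD (U : nmodType) m n (A B : 'M[U]_(m, n)) i j :
  (A + B) i j = A i j + B i j.
Proof. by rewrite mxE. Qed.

Lemma entryN (U : zmodType) m n (A : 'M[U]_(m, n)) i j : (- A) i j = - A i j.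
Proof. by rewrite mxE. Qed.

Lemma trmxB (U : zmodType) m n (A B : 'M[U]_(m, n)) : (A - B)^T = A^T - B^T.
Proof. by apply/matrixP => i j; rewrite !mxE. Qed.

Lemma unitmx_row_neq0 (F : comUnitRingType) n (P : 'M[F]_n) i :
  P \in unitmx -> row i P != 0.
Proof.
move=> P_unit; apply/eqP => /(congr1 (mulmx^~ (invmx P))).
rewrite mul0mx rowE -mulmxA mulmxV // mulmx1 => /matrixP/(_ 0 i).
by rewrite !mxE !eqxx /= => /eqP; rewrite oner_eq0.
Qed.

Section RealSymmetricSpectral.
Variable R : rcfType.
Local Notation C := R[i].
Local Notation rc := (real_complex R).
Local Notation re := (@complex.Re R).
Local Notation im := (@complex.Im R).
Local Open Scope sesquilinear_scope.

Lemma Re_sum I (r : seq I) (F : I -> C) :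
  re (\sum_(i <- r) F i) = \sum_(i <- r) re (F i).
Proof. by apply: big_morph => // -[? ?] [? ?]. Qed.

Lemma Im_sum I (r : seq I) (F : I -> C) :
  im (\sum_(i <- r) F i) = \sum_(i <- r) im (F i).
Proof. by apply: big_morph => // -[? ?] [? ?]. Qed.

Lemma Re_mul_real (z : C) (r : R) : re (z * rc r) = re z * r.
Proof. by case: z => a b /=; rewrite mulr0 subr0. Qed.

Lemma Im_mul_real (z : C) (r : R) : im (z * rc r) = im z * r.
Proof. by case: z => a b /=; rewrite mulr0 add0r. Qed.

Lemma map_Re_mul_real m n p (v : 'M[C]_(m, n)) (A : 'M[R]_(n, p)) :
  map_mx re (v *m map_mx rc A) = map_mx re v *m A.
Proof.
apply/matrixP => i k; rewrite !mxE Re_sum.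
by apply: eq_bigr => j _; rewrite !mxE Re_mul_real.
Qed.

Lemma map_Im_mul_real m n p (v : 'M[C]_(m, n)) (A : 'M[R]_(n, p)) :
  map_mx im (v *m map_mx rc A) = map_mx im v *m A.
Proof.
apply/matrixP => i k; rewrite !mxE Im_sum.
by apply: eq_bigr => j _; rewrite !mxE Im_mul_real.
Qed.

(* A real eigenvalue of the complexification of a real matrix is an eigenvalue
   of the matrix itself: the real or the imaginary part of a complex
   eigenvector is a nonzero real eigenvector. *)
Lemma complexified_eigenvalue n (A : 'M[R]_n) (a : R) :
  eigenvalue (map_mx rc A) (rc a) -> eigenvalue A a.
Proof.
case/eigenvalueP => v vA v_neq0.
have scale_real (f : C -> R) : (forall z, f (rc a * z) = a * f z) ->
    map_mx f (rc a *: v) = a *: map_mx f v.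
  by move=> fM; apply/matrixP => i j; rewrite !mxE fM.
have [re_eq0|re_neq0] := eqVneq (map_mx re v) 0; last first.
  apply/eigenvalueP; exists (map_mx re v) => //.
  by rewrite -map_Re_mul_real vA scale_real // => z; rewrite mulrC Re_mul_real mulrC.
have [im_eq0|im_neq0] := eqVneq (map_mx im v) 0; last first.
  apply/eigenvalueP; exists (map_mx im v) => //.
  by rewrite -map_Im_mul_real vA scale_real // => z; rewrite mulrC Im_mul_real mulrC.
case/eqP: v_neq0; apply/matrixP => i j.
move/matrixP/(_ i j): re_eq0; move/matrixP/(_ i j): im_eq0; rewrite !mxE.
by case: (v i j) => x y /= -> ->.
Qed.

Lemma complexified_hermitian n (A : 'M[R]_n) :
  A^T = A -> map_mx rc A \is hermsymmx.
Proof.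
move=> A_sym; apply: realsym_hermsym.
  apply/is_hermitianmxP; rewrite expr0 scale1r; apply/matrixP=> i j.
  by rewrite !mxE -{1}A_sym mxE.
by apply/mxOverP => i j; rewrite mxE complex_real.
Qed.

(* Spectral theorem for real symmetric matrices, in the form used below: there
   are real eigenvalues d_i of A with det A = prod_i d_i, and every vector x has
   nonnegative weights q x i (the squared coordinates of x in an orthonormal
   eigenbasis) that sum to |x|^2 and turn x^T A x into sum_i d_i q x i. *)
Lemma real_symmetric_spectral n (A : 'M[R]_n) : A^T = A ->
  exists d : 'I_n -> R, exists q : 'cV[R]_n -> 'I_n -> R,
   [/\ forall i, eigenvalue A (d i),
       \det A = \prod_i d i,
       forall x i, 0 <= q x i,
       forall x, sqnorm x = \sum_i q x i &
       forall x, qf A x = \sum_i d i * q x i].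
Proof.
move=> A_sym; pose A' := map_mx rc A.
have A'_herm : A' \is hermsymmx by exact: complexified_hermitian.
have /orthomx_spectralP A'E := hermitian_normalmx A'_herm.
set P := spectralmx A' in A'E; set D := spectral_diag A' in A'E.
have D_real i : D 0 i = rc (re (D 0 i)).
  by rewrite RRe_real // (mxOverP (hermitian_spectral_diag_real A'_herm)).
have P_unitary : P \is unitarymx by exact: spectral_unitarymx.
have P_unit : P \in unitmx by exact: spectral_unit.
have PA' : P *m A' = diag_mx D *m P by rewrite {1}A'E !mulmxA mulmxV // mul1mx.
have PtP : P ^t* *m P = 1%:M by rewrite -invmx_unitary // mulVmx.
pose y (x : 'cV[R]_n) := P *m map_mx rc x.
have yt (x : 'cV[R]_n) : y x ^t* = (map_mx rc x)^T *m P ^t*.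
  rewrite trmx_mul map_mxM; congr (_ *m _).
  by apply/matrixP => i j; rewrite !mxE; apply: conj_Creal; rewrite complex_real.
have conjT_entry (z : 'cV[C]_n) i : (z ^t*) 0 i = (z i 0)^* by rewrite !mxE.
have qE (x : 'cV[R]_n) i :
    rc (re ((y x i 0)^* * y x i 0)) = (y x i 0)^* * y x i 0.
  by rewrite RRe_real // ger0_real // mulrC mul_conjC_ge0.
exists (fun i => re (D 0 i)), (fun x i => re ((y x i 0)^* * y x i 0)); split.
- move=> i; apply: complexified_eigenvalue; rewrite -D_real.
  apply/eigenvalueP; exists (row i P).
    by rewrite -row_mul PA' row_mul row_diag_mx -scalemxAl -rowE.
  exact: unitmx_row_neq0.
- apply: complexI; rewrite -det_map_mx rmorph_prod /= -/A' A'E !det_mulmx det_inv.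
  rewrite det_diag mulrC mulrA mulrV ?mul1r -?unitmxE //.
  by apply: eq_bigr => i _; rewrite -D_real.
- by move=> x i; rewrite -(@lecR R) qE rmorph0 mulrC mul_conjC_ge0.
- move=> x; apply: complexI; rewrite rmorph_sum.
  have -> : rc (sqnorm x) = (y x ^t* *m y x) 0 0.
    by rewrite yt -mulmxA [P ^t* *m _]mulmxA PtP mul1mx map_trmx -map_mxM [RHS]mxE.
  by rewrite mxE; apply: eq_bigr => i _; rewrite conjT_entry; exact: esym (qE x i).
- move=> x; apply: complexI; rewrite rmorph_sum.
  have -> : rc (qf A x) = (y x ^t* *m diag_mx D *m y x) 0 0.
    have -> : y x ^t* *m diag_mx D *m y x = (map_mx rc x)^T *m A' *m map_mx rc x.
      by rewrite yt A'E (invmx_unitary P_unitary) !mulmxA.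
    by rewrite /A' map_trmx -!map_mxM [RHS]mxE.
  rewrite -mulmxA mul_diag_mx mxE; apply: eq_bigr => i _.
  rewrite conjT_entry (mxE _ _ i 0) rmorphM /= -D_real [X in _ = _ * X](qE x i).
  exact: mulrCA.
Qed.

End RealSymmetricSpectral.

Section QuadraticForms.
Variable R : realFieldType.

Lemma qf_diag n (d : 'rV[R]_n) (x : 'cV[R]_n) :
  qf (diag_mx d) x = \sum_i d 0 i * x i 0 ^+ 2.
Proof.
rewrite -mulmxA mul_diag_mx mxE.
by apply: eq_bigr => i _; rewrite !mxE expr2 mulrCA.
Qed.

Lemma sqnormE n (x : 'cV[R]_n) : sqnorm x = \sum_i x i 0 ^+ 2.
Proof. by rewrite mxE; apply: eq_bigr => i _; rewrite mxE expr2. Qed.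

Lemma weighted_sqsum_gt0 n (d : 'I_n -> R) (x : 'cV[R]_n) :
  (forall i, 0 < d i) -> x != 0 -> 0 < \sum_i d i * x i 0 ^+ 2.
Proof.
move=> d_gt0 x_neq0; have term_ge0 i : 0 <= d i * x i 0 ^+ 2.
  by rewrite mulr_ge0 ?sqr_ge0 ?ltW.
rewrite lt_def sumr_ge0 ?andbT //; apply: contra x_neq0 => /eqP/psumr_eq0P sum0.
apply/eqP/matrixP => i j; rewrite ord1 mxE; apply/eqP.
have /eqP := sum0 (fun k _ => term_ge0 k) i isT.
by rewrite mulf_eq0 (gt_eqF (d_gt0 i)) sqrf_eq0.
Qed.

Lemma sqnorm_gt0 n (x : 'cV[R]_n) : x != 0 -> 0 < sqnorm x.
Proof.
move=> x_neq0; rewrite sqnormE.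
under eq_bigr do rewrite -[_ ^+ 2]mul1r.
exact: weighted_sqsum_gt0.
Qed.

Lemma pd_unitmx n (A : 'M[R]_n) :
  (forall x : 'cV_n, x != 0 -> 0 < qf A x) -> A \in unitmx.
Proof.
move=> A_pd; rewrite -row_free_unit -kermx_eq0; apply/rowV0P => v /sub_kermxP vA.
apply/eqP/negPn/negP => v_neq0.
by have := A_pd v^T; rewrite trmx_eq0 trmxK vA mul0mx mxE ltxx => /(_ v_neq0).
Qed.

Lemma eigenvalue_rayleigh n (A : 'M[R]_n) a : eigenvalue A a ->
  exists2 x : 'cV_n, x != 0 & qf A x = a * sqnorm x.
Proof.
case/eigenvalueP => v vA v_neq0; exists v^T; first by rewrite trmx_eq0.
by rewrite trmxK vA -scalemxAl mxE.
Qed.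

Lemma eigenvalue_between n (A : 'M[R]_n) a lo hi : eigenvalue A a ->
  (forall x : 'cV_n, lo * sqnorm x <= qf A x) ->
  (forall x : 'cV_n, qf A x <= hi * sqnorm x) -> lo <= a <= hi.
Proof.
case/eigenvalue_rayleigh => x x_neq0 Ax lo_le le_hi.
have x_gt0 := sqnorm_gt0 x_neq0.
by rewrite -(ler_pM2r x_gt0) -Ax lo_le -(ler_pM2r x_gt0) -Ax le_hi.
Qed.

End QuadraticForms.

Section RayleighBounds.
Variable R : rcfType.

Lemma min_eigenvalue_le_qf n (A : 'M[R]_n) lam : A^T = A ->
  is_min_eigenvalue A lam -> forall x : 'cV_n, lam * sqnorm x <= qf A x.
Proof.
move=> A_sym [_ lam_min] x.
have [d [q [d_eig _ q_ge0 -> ->]]] := real_symmetric_spectral A_sym.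
by rewrite mulr_sumr; apply: ler_sum => i _; rewrite ler_wpM2r ?lam_min.
Qed.

(* If lo |x|^2 <= x^T A x <= hi |x|^2 with lo >= 0, then the determinant of the
   symmetric matrix A, the product of its eigenvalues, lies in [lo^n, hi^n]. *)
Lemma det_between n (A : 'M[R]_n) lo hi : A^T = A -> 0 <= lo ->
  (forall x : 'cV_n, lo * sqnorm x <= qf A x) ->
  (forall x : 'cV_n, qf A x <= hi * sqnorm x) ->
  lo ^+ n <= \det A <= hi ^+ n.
Proof.
move=> A_sym lo_ge0 lo_le le_hi.
have [d [q [d_eig -> _ _ _]]] := real_symmetric_spectral A_sym.
have d_between i : lo <= d i <= hi := eigenvalue_between (d_eig i) lo_le le_hi.
have pow_prod (r : R) : r ^+ n = \prod_(i < n) r by rewrite prodr_const card_ord.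
rewrite !pow_prod.
apply/andP; split; apply: ler_prod => i _; case/andP: (d_between i) => [lo_d d_hi].
  by rewrite lo_ge0 lo_d.
by rewrite d_hi (le_trans lo_ge0 lo_d).
Qed.

End RayleighBounds.

Section MeasurementUpdate.
Variables (R : realFieldType) (n p : nat).
Variables (Sigma : 'M[R]_n) (C : 'M[R]_(p, n)) (V : 'M[R]_p).
Hypotheses (Sigma_sym : Sigma^T = Sigma) (V_sym : V^T = V).

(* The innovation covariance, its inverse and the posterior covariance; the
   optimal measurement weight for a state direction x is K C Sigma x. *)
Let M := C *m Sigma *m C^T + V.
Hypothesis M_unit : M \in unitmx.
Let K := invmx M.
Let Sbar := Sigma - Sigma *m C^T *m K *m C *m Sigma.

Lemma innovation_sym : M^T = M.
Proof. by rewrite /M linearD /= !trmx_mul trmxK Sigma_sym V_sym mulmxA. Qed.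

Let K_sym : K^T = K.
Proof. by rewrite /K trmx_inv innovation_sym. Qed.

Lemma innovation_qf (w : 'cV[R]_p) : qf M w = qf Sigma (C^T *m w) + qf V w.
Proof. by rewrite /M mulmxDr mulmxDl entryD trmx_mul trmxK !mulmxA. Qed.

Lemma posterior_sym : Sbar^T = Sbar.
Proof.
by rewrite /Sbar trmxB !trmx_mul trmxK Sigma_sym K_sym !mulmxA.
Qed.

(* Completing the square in w: the posterior quadratic form is the minimum over
   measurement weights w of the cost of explaining x by C^T w. *)
Lemma completion_of_squares (x : 'cV[R]_n) (w : 'cV[R]_p) :
  qf Sigma (x - C^T *m w) + qf V w = qf Sbar x + qf M (w - K *m C *m Sigma *m x).
Proof.
have MK q (A : 'M[R]_(q, p)) : A *m M *m K = A by rewrite -mulmxA mulmxV ?mulmx1.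
have KM q (A : 'M[R]_(q, p)) : A *m K *m M = A by rewrite -mulmxA mulVmx ?mulmx1.
rewrite /Sbar !(trmxB, trmx_mul, trmxK, Sigma_sym, K_sym).
rewrite !(mulmxBl, mulmxBr) !mulmxA !MK ?KM /M !(mulmxDl, mulmxDr) !mulmxA.
by rewrite !(entryD, entryN); ring.
Qed.

Lemma posterior_qf (x : 'cV[R]_n) :
  qf Sbar x = qf Sigma (x - C^T *m (K *m C *m Sigma *m x))
             + qf V (K *m C *m Sigma *m x).
Proof. by rewrite completion_of_squares subrr trmx0 !mul0mx [X in _ + X]mxE addr0. Qed.

Lemma posterior_qf_le (Sigma_psd : forall y : 'cV_n, 0 <= qf Sigma y)
    (V_psd : forall w : 'cV_p, 0 <= qf V w) (x : 'cV[R]_n) (w : 'cV[R]_p) :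
  qf Sbar x <= qf Sigma (x - C^T *m w) + qf V w.
Proof. by rewrite completion_of_squares lerDl innovation_qf addr_ge0. Qed.

Lemma posterior_psd (Sigma_psd : forall y : 'cV_n, 0 <= qf Sigma y)
    (V_psd : forall w : 'cV_p, 0 <= qf V w) (x : 'cV[R]_n) : 0 <= qf Sbar x.
Proof. by rewrite posterior_qf addr_ge0. Qed.

End MeasurementUpdate.

(* Adding a congruent positive semidefinite term can only increase a quadratic
   form; this is how the Riccati equation gives Sigma >= W. *)
Lemma qf_congruence_add_ge (R : realFieldType) n m (H : 'M[R]_(n, m))
    (S : 'M[R]_m) (W : 'M[R]_n) :
  (forall x : 'cV_m, 0 <= qf S x) ->
  forall y : 'cV_n, qf W y <= qf (H *m S *m H^T + W) y.
Proof. by move=> S_psd y; rewrite innovation_qf lerDr. Qed.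

Lemma harmonic_gain (R : realFieldType) (lam a b : R) :
  0 < lam -> 0 < a -> 0 < b ->
  0 < b / (a + b / lam) /\ b / (a + b / lam) * (lam^-1 + a / b) = 1.
Proof.
move=> lam_gt0 a_gt0 b_gt0; split; first by rewrite divr_gt0 // addr_gt0 // divr_gt0.
field; rewrite !gt_eqF //; exact: addr_gt0 (mulr_gt0 a_gt0 lam_gt0) b_gt0.
Qed.

Lemma weighted_split_bound (R : realFieldType) (a b g k y w : R) :
  0 < a -> 0 < b -> 0 <= k -> k * (a^-1 + g ^+ 2 / b) <= 1 ->
  k * (y + g * w) ^+ 2 <= a * y ^+ 2 + b * w ^+ 2.
Proof.
move=> a_gt0 b_gt0 k_ge0 k_le.
have cauchy_schwarz :
    (y + g * w) ^+ 2 <= (a^-1 + g ^+ 2 / b) * (a * y ^+ 2 + b * w ^+ 2).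
  have -> : (a^-1 + g ^+ 2 / b) * (a * y ^+ 2 + b * w ^+ 2)
     = (y + g * w) ^+ 2 + (b * w - g * a * y) ^+ 2 / (a * b).
    by field; rewrite !gt_eqF.
  by rewrite lerDl divr_ge0 ?sqr_ge0 // mulr_ge0 ?ltW.
have rhs_ge0 : 0 <= a * y ^+ 2 + b * w ^+ 2.
  by rewrite addr_ge0 // mulr_ge0 ?sqr_ge0 ?ltW.
apply: le_trans (ler_wpM2l k_ge0 cauchy_schwarz) _.
by rewrite mulrA -[leRHS]mul1r ler_wpM2r.
Qed.

Section DiagonalMeasurement.
Variables (R : rcfType) (n : nat) (c v : 'I_n -> R) (Sigma : 'M[R]_n).
Hypotheses (c_neq0 : forall i, c i != 0) (v_gt0 : forall i, 0 < v i).
Hypothesis Sigma_psd : psd Sigma.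

Let C : 'M[R]_n := diag_mx (\row_i c i).
Let V : 'M[R]_n := diag_mx (\row_i v i).
Let Sbar := Sigma - Sigma *m C^T *m invmx (C *m Sigma *m C^T + V) *m C *m Sigma.

Let V_qf (w : 'cV[R]_n) : qf V w = \sum_i v i * w i 0 ^+ 2.
Proof. by rewrite qf_diag; under eq_bigr do rewrite mxE. Qed.

Let V_psd (w : 'cV[R]_n) : 0 <= qf V w.
Proof. by rewrite V_qf sumr_ge0 // => i _; rewrite mulr_ge0 ?sqr_ge0 ?ltW. Qed.

Lemma diag_innovation_unit : C *m Sigma *m C^T + V \in unitmx.
Proof.
apply: pd_unitmx => w w_neq0.
by rewrite innovation_qf ltr_wpDl ?(proj2 Sigma_psd) // V_qf weighted_sqsum_gt0.
Qed.

Lemma diag_posterior_sym : Sbar^T = Sbar.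
Proof. by apply: posterior_sym; [exact: proj1 Sigma_psd | exact: tr_diag_mx]. Qed.

Lemma diag_posterior_psd (x : 'cV[R]_n) : 0 <= qf Sbar x.
Proof.
exact: posterior_psd (proj1 Sigma_psd) (tr_diag_mx _) diag_innovation_unit
  (proj2 Sigma_psd) V_psd x.
Qed.

(* Upper bound: explain x exactly by w = C^-1 x, paying only the noise cost. *)
Lemma diag_posterior_upper d : (forall i, v i / c i ^+ 2 <= d) ->
  forall x : 'cV_n, qf Sbar x <= d * sqnorm x.
Proof.
move=> v_le x; pose w : 'cV[R]_n := \col_i (x i 0 / c i).
have Cw : C^T *m w = x.
  by apply/matrixP => i j; rewrite ord1 tr_diag_mx mul_diag_mx !mxE mulrC divfK.
apply: le_trans (posterior_qf_le (proj1 Sigma_psd) (tr_diag_mx _)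
  diag_innovation_unit (proj2 Sigma_psd) V_psd x w) _.
rewrite Cw subrr mulmx0 [X in X + _]mxE add0r V_qf sqnormE mulr_sumr.
apply: ler_sum => i _; rewrite mxE expr_div_n mulrCA mulrA [leRHS]mulrC -mulrA.
by rewrite ler_wpM2l ?sqr_ge0 ?v_le.
Qed.

(* Lower bound: when Sigma >= lam I, each coordinate of x = y + C^T w is
   charged at least k x_i^2 by weighted_split_bound. *)
Lemma diag_posterior_lower lam k : 0 < lam ->
  (forall y : 'cV_n, lam * sqnorm y <= qf Sigma y) -> 0 <= k ->
  (forall i, k * (lam^-1 + c i ^+ 2 / v i) <= 1) ->
  forall x : 'cV_n, k * sqnorm x <= qf Sbar x.
Proof.
move=> lam_gt0 Sigma_ge k_ge0 k_le x.
rewrite (posterior_qf (proj1 Sigma_psd) (tr_diag_mx _) diag_innovation_unit).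
set w := (X in x - C^T *m X); set y := x - C^T *m w.
have x_split i : x i 0 = y i 0 + c i * w i 0.
  by rewrite /y entryD entryN tr_diag_mx mul_diag_mx mxE [in RHS]mxE addrNK.
apply: le_trans (lerD (Sigma_ge y) (lexx (qf V w))).
rewrite V_qf !sqnormE !mulr_sumr -big_split; apply: ler_sum => i _.
by rewrite x_split weighted_split_bound.
Qed.

End DiagonalMeasurement.

Theorem theorem4 (R : rcfType) (n m : nat)
    (H W : 'M[R]_n) (D : 'M[R]_(n, m)) (c sigma : 'I_n -> R)
    (Sigma : 'M[R]_n) (lamW : R) (l u : 'I_n) :
  pd W ->
  W = D *m D^T ->
  (forall i, c i != 0) ->
  (forall i, 0 < sigma i) ->
  let C : 'M[R]_n := diag_mx (\row_i c i) in
  let V : 'M[R]_n := diag_mx (\row_i (sigma i ^+ 2)) in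
  observable H C ->
  controllable H D ->
  psd Sigma ->
  Sigma = H *m Sigma *m H^T
          - H *m Sigma *m C^T *m invmx (C *m Sigma *m C^T + V) *m C *m Sigma *m H^T
          + W ->
  is_min_eigenvalue W lamW ->
  (forall i, c l ^+ 2 / sigma l ^+ 2 <= c i ^+ 2 / sigma i ^+ 2) ->
  (forall i, c i ^+ 2 / sigma i ^+ 2 <= c u ^+ 2 / sigma u ^+ 2) ->
  let Sigmabar : 'M[R]_n :=
    Sigma - Sigma *m C^T *m invmx (C *m Sigma *m C^T + V) *m C *m Sigma in
  (sigma u ^+ 2 / (c u ^+ 2 + sigma u ^+ 2 / lamW)) ^+ n <= \det Sigmabar
  /\ \det Sigmabar <= (sigma l ^+ 2 / c l ^+ 2) ^+ n.
Proof.
move=> W_pd _ c_neq0 sigma_gt0 C V _ _ Sigma_psd riccati lamW_min l_min u_max Sbar.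
have s2_gt0 i : 0 < sigma i ^+ 2 by rewrite exprn_gt0.
have c2_gt0 i : 0 < c i ^+ 2 by rewrite exprn_even_gt0 ?c_neq0.
have lamW_gt0 : 0 < lamW.
  have [x x_neq0 Wx] := eigenvalue_rayleigh (proj1 lamW_min).
  by rewrite -(pmulr_lgt0 _ (sqnorm_gt0 x_neq0)) -Wx (proj2 W_pd).
(* The Riccati equation reads Sigma = H Sbar H^T + W, hence Sigma >= W >= lamW I. *)
have Sigma_ge (y : 'cV_n) : lamW * sqnorm y <= qf Sigma y.
  apply: le_trans (min_eigenvalue_le_qf (proj1 W_pd) lamW_min y) _.
  have -> : Sigma = H *m Sbar *m H^T + W.
    by rewrite {1}riccati /Sbar mulmxBr mulmxBl !mulmxA.
  exact: qf_congruence_add_ge (diag_posterior_psd c s2_gt0 Sigma_psd) y.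
have [k_gt0 k_u] := harmonic_gain lamW_gt0 (c2_gt0 u) (s2_gt0 u).
have k_le i : sigma u ^+ 2 / (c u ^+ 2 + sigma u ^+ 2 / lamW)
              * (lamW^-1 + c i ^+ 2 / sigma i ^+ 2) <= 1.
  by rewrite -k_u (ler_pM2l k_gt0) lerD2l u_max.
have d_ge i : sigma i ^+ 2 / c i ^+ 2 <= sigma l ^+ 2 / c l ^+ 2.
  by rewrite -[leLHS]invf_div -[leRHS]invf_div lef_pV2 ?posrE ?divr_gt0 ?l_min.
apply/andP; apply: det_between (diag_posterior_sym c _ Sigma_psd) (ltW k_gt0)
  (diag_posterior_lower s2_gt0 Sigma_psd lamW_gt0 Sigma_ge (ltW k_gt0) k_le)
  (diag_posterior_upper c_neq0 s2_gt0 Sigma_psd d_ge).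
Qed.
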